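(* Let $d\ge 3$. For $1\le i\le d$ let $h_i=a_1a_2\cdots a_{i-1}a_ia_{i-1}\cdots a_3a_2$ (so $h_1=a_1$, $h_2=a_1a_2$, $h_3=a_1a_2a_3a_2$, etc.). Then $h_i$ has infinite order in $G_d$ for every $1\le i\le d$.
   Context: Let $d\ge 3$, $X=\{1,\dots,d\}$, $T$ the $d$-regular rooted tree with vertex set $X^*$. $\mathrm{Aut}(T)$ is the group of root-preserving automorphisms with product left-to-right: $(gh)(u)=h(g(u))$. Sections $g|_u$ are defined by $g(uv)=g(u)\,g|_u(v)$; we write $g=(g|_1,\dots,g|_d)\lambda_g$ with $\lambda_g\in S_d$ the action on the first level; $e$ is the identity; $\overline{j}\in\{1,\dots,d\}$ denotes $j$ mod $d$. $G_d=\langle a_1,\dots,a_d\rangle\le\mathrm{Aut}(T)$ where $a_i$ acts on the first level as $(i\ \overline{i+1})$, with $a_i|_i=a_i$, $a_i|_{\overline{i+1}}=a_{\overline{i+1}}$, and $a_i|_x=e$ otherwise. *)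

From mathcomp Require Import all_boot.
Set Implicit Arguments. Unset Strict Implicit. Unset Printing Implicit Defensive.

(* Alphabet X = {1,...,d} is encoded as 'I_d (letter k : 'I_d stands for k+1).
   Vertices of the d-regular rooted tree T are words u : seq 'I_d.
   The cyclic successor  j |-> \overline{j+1}  is [ordS]. *)

(* Action of the generator a_i on a vertex:
   a_i (x w) = (i i+1)(x) . (a_i|_x)(w), with a_i|_i = a_i, a_i|_{i+1} = a_{i+1},
   and a_i|_x = e otherwise. *)
Fixpoint gen_act (d : nat) (i : 'I_d) (w : seq 'I_d) : seq 'I_d :=
  match w with
  | [::] => [::]
  | x :: w' =>
      if x == i then ordS i :: gen_act i w'
      else if x == ordS i then i :: gen_act (ordS i) w'
      else x :: w'
  end.

(* An element of G_d given as a word s = [:: i1; ...; ik] in the generators,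
   i.e. the product a_{i1} a_{i2} ... a_{ik}.  Products are left-to-right:
   (gh)(u) = h(g(u)), so a_{i1} acts first. *)
Definition word_act (d : nat) (s : seq 'I_d) (u : seq 'I_d) : seq 'I_d :=
  foldl (fun v i => gen_act i v) u s.

(* h_i = a_1 a_2 ... a_{i-1} a_i a_{i-1} ... a_3 a_2  (0-based index i : 'I_d):
   generators with index <= i in increasing order, then those with
   0 < index < i in decreasing order. *)
Definition h_word (d : nat) (i : 'I_d) : seq 'I_d :=
  [seq x <- enum 'I_d | (nat_of_ord x <= nat_of_ord i)%N]
  ++ rev [seq x <- enum 'I_d | (0 < nat_of_ord x < nat_of_ord i)%N].

Definition infinite_order (d : nat) (g : seq 'I_d -> seq 'I_d) : Prop :=
  forall n : nat, (0 < n)%N -> exists u : seq 'I_d, iter n g u <> u.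

From mathcomp Require Import all_boot zify.
Set Implicit Arguments. Unset Strict Implicit. Unset Printing Implicit Defensive.

(* An element given as a word s in the generators acts on a vertex x w by
   sending the first letter x to s(x) and w to s|_x(w); both the permutation
   of the first level and the section word are computable letter by letter.
   If x lies on a cycle of length m of s on the first level and the section of
   s^m at x is t, then s^n moves the letter x when m does not divide n, and
   otherwise fixes x with section t^(n/m); so t of infinite order forces s of
   infinite order.  In the paper's numbering, h_1 has the 2-cycle (1 2) and
   h_1^2|_1 = h_2; for 1 < i < d, h_i has the 3-cycle (1 i+1 2) and
   h_i^3|_1 = h_(i+1); h_d fixes 1 with section g = a_1 a_2 ... a_d.  Finally
   g has the (d-1)-cycle (2 d d-1 ... 3) with section t = a_2 a_1 a_d ... a_3,
   and t has the (d-1)-cycle (1 2 4 5 ... d) with section g; since d - 1 >= 2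
   the exponent strictly drops along this loop, so g and t, and hence every
   h_i, have infinite order. *)

Definition word_pow (T : Type) (s : seq T) (m : nat) : seq T := flatten (nseq m s).

Lemma word_powSr (T : Type) (s : seq T) m : word_pow s m.+1 = word_pow s m ++ s.
Proof. by rewrite /word_pow -addn1 nseqD flatten_cat /= cats0. Qed.

Lemma word_powD (T : Type) (s : seq T) m k : word_pow s (m + k) = word_pow s m ++ word_pow s k.
Proof. by rewrite /word_pow nseqD flatten_cat. Qed.

Lemma word_powM (T : Type) (s : seq T) m k : word_pow s (m * k) = word_pow (word_pow s m) k.
Proof. by elim: k => [|k IH]; rewrite ?muln0 // mulnS word_powD IH. Qed.

Lemma map_word_pow (T U : Type) (f : T -> U) (s : seq T) m :
  map f (word_pow s m) = word_pow (map f s) m.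
Proof. by rewrite /word_pow map_flatten map_nseq. Qed.

Lemma word_pow1 (T : Type) (s : seq T) : word_pow s 1 = s.
Proof. exact: cats0. Qed.

Lemma iotaS_cat a b : iota a b.+1 = iota a b ++ [:: a + b].
Proof. by rewrite -addn1 iotaD. Qed.

Lemma iota_mid a b c : b < c -> iota a c = iota a b ++ a + b :: iota (a + b).+1 (c - b.+1).
Proof. by move=> lt_bc; rewrite -{1}(subnKC lt_bc) addSnnS iotaD. Qed.

Section SectionCalculus.
Variables (T : eqType) (succ : T -> T).

Definition gen_perm (j x : T) : T :=
  if x == j then succ j else if x == succ j then j else x.

Definition gen_sec (j x : T) : seq T :=
  if x == j then [:: j] else if x == succ j then [:: succ j] else [::].

Definition word_perm (s : seq T) (x : T) : T := foldl (fun y j => gen_perm j y) x s.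

Fixpoint word_sec (s : seq T) (x : T) : seq T :=
  if s is j :: s' then gen_sec j x ++ word_sec s' (gen_perm j x) else [::].

Definition sends (s : seq T) (x y : T) (t : seq T) : Prop :=
  word_perm s x = y /\ word_sec s x = t.

Definition period_section (s : seq T) (x : T) (m : nat) (t : seq T) : Prop :=
  [/\ 0 < m, sends (word_pow s m) x x t
    & forall j, 0 < j < m -> word_perm (word_pow s j) x != x].

Lemma sends_nil x : sends [::] x x [::].
Proof. by []. Qed.

Lemma word_perm_cat s1 s2 x : word_perm (s1 ++ s2) x = word_perm s2 (word_perm s1 x).
Proof. by rewrite /word_perm foldl_cat. Qed.

Lemma word_sec_cat s1 s2 x :
  word_sec (s1 ++ s2) x = word_sec s1 x ++ word_sec s2 (word_perm s1 x).
Proof. by elim: s1 x => [|j s1 IH] x //=; rewrite IH catA. Qed.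

Lemma sends_cat s1 s2 x y z t1 t2 :
  sends s1 x y t1 -> sends s2 y z t2 -> sends (s1 ++ s2) x z (t1 ++ t2).
Proof.
by move=> [Hp1 Hs1] [Hp2 Hs2]; rewrite /sends word_perm_cat word_sec_cat Hp1 Hs1 Hp2 Hs2.
Qed.

Lemma sends_gen_fst j y : y = succ j -> sends [:: j] j y [:: j].
Proof. by move=> ->; rewrite /sends /= /gen_perm /gen_sec eqxx cats0. Qed.

Lemma sends_gen_snd j y : y = succ j -> y != j -> sends [:: j] y j [:: y].
Proof. by move=> -> /negbTE nj; rewrite /sends /= /gen_perm /gen_sec nj eqxx cats0. Qed.

Definition avoids (x j : T) : bool := (x != j) && (x != succ j).

Lemma sends_avoided s x : all (avoids x) s -> sends s x x [::].
Proof.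
elim: s => [|j s IH] //= /andP [/andP [/negbTE n1 /negbTE n2] /IH [Hp Hs]].
by rewrite /sends /= /gen_perm /gen_sec n1 n2.
Qed.

Lemma sends_pow_fixed s x t k : sends s x x t -> sends (word_pow s k) x x (word_pow t k).
Proof. by move=> H; elim: k => [|k IH] //; exact: (sends_cat H IH). Qed.

Lemma period_section_fixed s x t : sends s x x t -> period_section s x 1 t.
Proof. by move=> H; split; rewrite ?word_pow1 // => j /andP [j0 j1]; lia. Qed.

Lemma period_section_2 s x y t1 t2 :
  y != x -> sends s x y t1 -> sends s y x t2 -> period_section s x 2 (t1 ++ t2).
Proof.
move=> yx Hxy Hyx; split=> //; last first.
  move=> j /andP [j0 j2]; have -> : j = 1 by lia.
  by rewrite word_pow1 Hxy.1.
by rewrite -[t1 ++ t2]cats0 -catA; exact: (sends_cat Hxy (sends_cat Hyx (sends_nil x))).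
Qed.

Lemma period_section_3 s x y z t1 t2 t3 :
  y != x -> z != x -> sends s x y t1 -> sends s y z t2 -> sends s z x t3 ->
  period_section s x 3 (t1 ++ t2 ++ t3).
Proof.
move=> yx zx Hxy Hyz Hzx; split=> //.
  rewrite -[t3]cats0.
  exact: (sends_cat Hxy (sends_cat Hyz (sends_cat Hzx (sends_nil x)))).
move=> j /andP [j0 j3]; have [-> | ->] : j = 1 \/ j = 2 by lia.
  by rewrite word_pow1 Hxy.1.
by rewrite (sends_cat Hxy (sends_cat Hyz (sends_nil z))).1.
Qed.

End SectionCalculus.

Section Transport.
Variables (T U : eqType) (succT : T -> T) (succU : U -> U) (f : T -> U).
Hypotheses (f_inj : injective f) (f_succ : forall x, f (succT x) = succU (f x)).

Lemma gen_perm_map j x : f (gen_perm succT j x) = gen_perm succU (f j) (f x).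
Proof. by rewrite /gen_perm -f_succ !(inj_eq f_inj); case: ifP => //; case: ifP. Qed.

Lemma gen_sec_map j x : map f (gen_sec succT j x) = gen_sec succU (f j) (f x).
Proof. by rewrite /gen_sec -f_succ !(inj_eq f_inj); case: ifP => //; case: ifP. Qed.

Lemma word_perm_map s x : f (word_perm succT s x) = word_perm succU (map f s) (f x).
Proof. by elim: s x => [|j s IH] x //=; rewrite -gen_perm_map -IH. Qed.

Lemma word_sec_map s x : map f (word_sec succT s x) = word_sec succU (map f s) (f x).
Proof. by elim: s x => [|j s IH] x //=; rewrite map_cat gen_sec_map IH gen_perm_map. Qed.

Lemma period_section_map s x m t :
  period_section succU (map f s) (f x) m (map f t) <-> period_section succT s x m t.
Proof.
have Ep j : word_perm succU (word_pow (map f s) j) (f x) = f (word_perm succT (word_pow s j) x).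
  by rewrite -map_word_pow -word_perm_map.
have Es : word_sec succU (word_pow (map f s) m) (f x) = map f (word_sec succT (word_pow s m) x).
  by rewrite -map_word_pow -word_sec_map.
rewrite /period_section /sends Ep Es.
split=> -[m0 [Hp Hs] Hj]; split=> // [|j /Hj]; rewrite ?Ep ?(inj_eq f_inj) //.
- by split; [apply: f_inj | apply: (inj_map f_inj)].
- by rewrite Hp Hs.
Qed.

End Transport.

(* Letters are also handled as natural numbers, where [lia] applies:
   [succn d] is [ordS] read through [val]. *)
Definition succn (N j : nat) : nat := j.+1 %% N.

Section GeneratorWords.
Variable d : nat.
Local Notation succ := (@ordS d).

Lemma word_act_cat (s1 s2 : seq 'I_d) u : word_act (s1 ++ s2) u = word_act s2 (word_act s1 u).
Proof. by rewrite /word_act foldl_cat. Qed.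

Lemma gen_act_cons (i x : 'I_d) w :
  gen_act i (x :: w) = gen_perm succ i x :: word_act (gen_sec succ i x) w.
Proof. by rewrite /= /gen_perm /gen_sec; case: (x == i) => //; case: (x == succ i). Qed.

Lemma word_act_cons (s : seq 'I_d) x w :
  word_act s (x :: w) = word_perm succ s x :: word_act (word_sec succ s x) w.
Proof.
elim: s x w => [|j s IH] x w //.
by rewrite -[word_act (j :: s) _]/(word_act s (gen_act j (x :: w))) gen_act_cons IH -word_act_cat.
Qed.

Lemma iter_word_act (s : seq 'I_d) n u : iter n (word_act s) u = word_act (word_pow s n) u.
Proof. by elim: n u => [|n IH] u //; rewrite iterS IH word_powSr word_act_cat. Qed.

Lemma period_section_val (s t : seq 'I_d) x m :
  period_section (succn d) (map val s) (val x) m (map val t) <-> period_section succ s x m t.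
Proof. exact: (period_section_map (@val_inj _ _ _)). Qed.

Definition moves (g : seq 'I_d -> seq 'I_d) : Prop := exists u, g u <> u.

Lemma moves_iter_of_section (s t : seq 'I_d) x m n :
  period_section succ s x m t -> 0 < n ->
  (forall k, n = m * k -> moves (iter k (word_act t))) -> moves (iter n (word_act s)).
Proof.
move=> [m0 Hcyc Hret] n0 IH.
have Hcyc_k k : sends succ (word_pow s (m * k)) x x (word_pow t k).
  by rewrite word_powM; apply: sends_pow_fixed.
have [r0 | r_gt0] := posnP (n %% m).
  have Hn : n = m * (n %/ m) by rewrite {1}(divn_eq n m) r0 addn0 mulnC.
  have [u Hu] := IH _ Hn.
  exists (x :: u); rewrite !iter_word_act Hn word_act_cons.
  by have [-> ->] := Hcyc_k (n %/ m); rewrite -iter_word_act => -[].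
exists [:: x]; rewrite iter_word_act word_act_cons => -[] /eqP + _.
rewrite {1}(divn_eq n m) mulnC word_powD word_perm_cat (Hcyc_k _).1.
by apply/negP; rewrite Hret // r_gt0 ltn_pmod.
Qed.

Lemma infinite_order_of_section (s t : seq 'I_d) x m :
  period_section succ s x m t -> infinite_order (word_act t) -> infinite_order (word_act s).
Proof.
move=> Hps Ht n n0; apply: (moves_iter_of_section Hps n0) => k Hk.
by apply: Ht; move: n0; rewrite Hk muln_gt0 => /andP [].
Qed.

End GeneratorWords.

Definition h_nat (i : nat) : seq nat := iota 0 i.+1 ++ rev (iota 1 i.-1).

Section CyclicLetters.
Variable n : nat.
Local Notation succ := (succn n.+1).
Local Notation sendsn := (sends succ).

Lemma succnS j : j < n -> succ j = j.+1.
Proof. by move=> lt_jn; rewrite /succn modn_small. Qed.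

Lemma succn_last : succ n = 0.
Proof. exact: modnn. Qed.

Lemma succn_cases j : j <= n -> (j < n /\ succ j = j.+1) \/ (j = n /\ succ j = 0).
Proof.
rewrite leq_eqVlt => /orP [/eqP -> | lt_jn]; first by right; rewrite succn_last.
by left; rewrite succnS.
Qed.

Lemma avoids_iota a b x :
  a + b <= n.+1 -> x < a \/ a + b < x -> a + b <= n \/ 0 < x -> all (avoids succ x) (iota a b).
Proof.
move=> hab hx hx0; apply/allP => j; rewrite mem_iota => hj; rewrite /avoids.
by have := @succn_cases j; lia.
Qed.

Lemma sends_iota_fixed a b x :
  a + b <= n.+1 -> x < a \/ a + b < x -> a + b <= n \/ 0 < x -> sendsn (iota a b) x x [::].
Proof. by move=> *; apply/sends_avoided/avoids_iota. Qed.

Lemma sends_rev_iota_fixed a b x :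
  a + b <= n.+1 -> x < a \/ a + b < x -> a + b <= n \/ 0 < x -> sendsn (rev (iota a b)) x x [::].
Proof. by move=> *; apply/sends_avoided; rewrite all_rev; apply/avoids_iota. Qed.

Lemma sends_iota_up a b : a + b <= n -> sendsn (iota a b) a (a + b) (iota a b).
Proof.
elim: b a => [|b IH] a hab; first by rewrite addn0.
rewrite -addSnnS -[iota a b.+1]/([:: a] ++ iota a.+1 b).
apply: sends_cat; first by apply: sends_gen_fst; rewrite succnS //; lia.
by apply: IH; lia.
Qed.

Lemma sends_iota_down a b :
  a + b <= n -> sendsn (rev (iota a b)) (a + b) a (rev (iota a.+1 b)).
Proof.
elim: b a => [|b IH] a hab; first by rewrite addn0.
rewrite /= !rev_cons -!cats1 -addSnnS.
apply: sends_cat; first by apply: IH; lia.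
by apply: sends_gen_snd; rewrite ?succnS //; lia.
Qed.


Lemma period_section_h_last : 1 <= n -> period_section succ (h_nat n) 0 1 (iota 0 n.+1).
Proof.
move=> n1; apply: period_section_fixed.
have up := @sends_iota_up 0 n (leqnn n); rewrite add0n in up.
have wrap : sendsn [:: n] n 0 [:: n] by apply: sends_gen_fst; rewrite succn_last.
have fixed : sendsn (rev (iota 1 n.-1)) 0 0 [::] by apply: sends_rev_iota_fixed; lia.
by move: (sends_cat (sends_cat up wrap) fixed); rewrite cats0 -iotaS_cat.
Qed.

Lemma period_section_h0 : 1 <= n -> period_section succ (h_nat 0) 0 2 (h_nat 1).
Proof.
move=> n1; apply: (period_section_2 (y := 1) (t1 := [:: 0]) (t2 := [:: 1])) => //.
  by apply: sends_gen_fst; rewrite succnS.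
by apply: sends_gen_snd; rewrite ?succnS.
Qed.

Lemma period_section_h_mid i :
  0 < i < n -> period_section succ (h_nat i) 0 3 (h_nat i.+1).
Proof.
move=> /andP [i0 lt_in].
have -> : h_nat i.+1 = iota 0 i.+1 ++ (i.+1 :: rev (iota 2 i.-1)) ++ [:: 1].
  by rewrite /h_nat iotaS_cat -(prednK i0) /= rev_cons -cats1 -!catA.
apply: (period_section_3 (y := i.+1) (z := 1)) => //.
- have up := @sends_iota_up 0 i.+1 lt_in.
  have fixed : sendsn (rev (iota 1 i.-1)) i.+1 i.+1 [::] by apply: sends_rev_iota_fixed; lia.
  by move: (sends_cat up fixed); rewrite cats0.
- have fixed : sendsn (iota 0 i) i.+1 i.+1 [::] by apply: sends_iota_fixed; lia.
  have swap : sendsn [:: i] i.+1 i [:: i.+1] by apply: sends_gen_snd; rewrite ?succnS //; lia.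
  have down := @sends_iota_down 1 i.-1 (ltac:(lia)).
  rewrite add1n (prednK i0) in down.
  by move: (sends_cat (sends_cat fixed swap) down); rewrite /h_nat iotaS_cat.
- have swap : sendsn [:: 0] 1 0 [:: 1] by apply: sends_gen_snd; rewrite ?succnS //; lia.
  have fixed1 : sendsn (iota 1 i) 0 0 [::] by apply: sends_iota_fixed; lia.
  have fixed2 : sendsn (rev (iota 1 i.-1)) 0 0 [::] by apply: sends_rev_iota_fixed; lia.
  by move: (sends_cat (sends_cat swap fixed1) fixed2); rewrite !cats0.
Qed.

End CyclicLetters.

Section GeneratorCycle.
Variable n : nat.
Hypothesis n_ge2 : 2 <= n.
Local Notation succ := (succn n.+1).
Local Notation sendsn := (sends succ).

(* The letters of a_2 a_1 a_d a_(d-1) ... a_3; those of a_1 ... a_d are [iota 0 n.+1]. *)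
Definition twisted_gens : seq nat := [:: 1; 0] ++ rev (iota 2 n.-1).

Lemma sends_gens_1 : sendsn (iota 0 n.+1) 1 n [:: 1; 0].
Proof.
have -> : iota 0 n.+1 = [:: 0] ++ iota 1 n.-1 ++ [:: n].
  by rewrite /= -{1}(prednK (ltnW n_ge2)) iotaS_cat add1n prednK //; lia.
have swap : sendsn [:: 0] 1 0 [:: 1] by apply: sends_gen_snd; rewrite ?succnS //; lia.
have fixed : sendsn (iota 1 n.-1) 0 0 [::] by apply: sends_iota_fixed; lia.
have wrap : sendsn [:: n] 0 n [:: 0] by apply: sends_gen_snd; rewrite ?succn_last //; lia.
exact: (sends_cat swap (sends_cat fixed wrap)).
Qed.

Lemma sends_gens k : 2 <= k <= n -> sendsn (iota 0 n.+1) k k.-1 [:: k].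
Proof.
move=> hk; have k0 : 0 < k by lia.
rewrite (@iota_mid 0 k.-1 n.+1) ?add0n ?prednK //; last lia.
have fixed1 : sendsn (iota 0 k.-1) k k [::] by apply: sends_iota_fixed; lia.
have swap : sendsn [:: k.-1] k k.-1 [:: k].
  by apply: sends_gen_snd; rewrite ?succnS ?prednK //; lia.
have fixed2 : sendsn (iota k (n.+1 - k)) k.-1 k.-1 [::] by apply: sends_iota_fixed; lia.
by move: (sends_cat fixed1 (sends_cat swap fixed2)); rewrite cats0.
Qed.

Lemma sends_pow_gens j :
  1 <= j <= n ->
  sendsn (word_pow (iota 0 n.+1) j) 1 (n.+1 - j) ([:: 1; 0] ++ rev (iota (n.+2 - j) j.-1)).
Proof.
elim: j => [//|j IH] hj; have [-> | j0] := posnP j.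
  by rewrite word_pow1 subn1; apply: sends_gens_1.
have -> : n.+1 - j.+1 = (n.+1 - j).-1 by lia.
have -> : rev (iota (n.+2 - j.+1) j) = rev (iota (n.+2 - j) j.-1) ++ [:: n.+1 - j].
  by rewrite -[X in iota _ X](prednK j0) /= rev_cons -cats1; congr (rev (iota _ _) ++ _); lia.
rewrite word_powSr catA; apply: sends_cat; first by apply: IH; lia.
by apply: sends_gens; lia.
Qed.

Lemma period_section_gens : period_section succ (iota 0 n.+1) 1 n twisted_gens.
Proof.
split; first lia.
  have := @sends_pow_gens n; rewrite subSnn -addn2 addKn.
  by apply; rewrite leqnn; lia.
move=> j hj; rewrite (@sends_pow_gens j _).1; lia.
Qed.

Lemma sends_twisted_tail k : 2 <= k <= n -> sendsn (rev (iota 2 n.-1)) k (succ k) [:: k].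
Proof.
move=> hk; rewrite (@iota_mid 2 (k - 2) n.-1); last lia.
rewrite rev_cat rev_cons -cats1 -catA; have -> : 2 + (k - 2) = k by lia.
have fixed1 : sendsn (rev (iota k.+1 (n.-1 - (k - 2).+1))) k k [::].
  by apply: sends_rev_iota_fixed; lia.
have hit : sendsn [:: k] k (succ k) [:: k] by apply: sends_gen_fst.
have fixed2 : sendsn (rev (iota 2 (k - 2))) (succ k) (succ k) [::].
  by apply: sends_rev_iota_fixed; have := @succn_cases n k; lia.
by move: (sends_cat fixed1 (sends_cat hit fixed2)); rewrite cats0.
Qed.

Lemma sends_twisted_0 : sendsn twisted_gens 0 1 [:: 0].
Proof.
have fixed1 : sendsn [:: 1] 0 0 [::] by apply: sends_avoided; rewrite /= /avoids succnS; lia.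
have hit : sendsn [:: 0] 0 1 [:: 0] by apply: sends_gen_fst; rewrite succnS //; lia.
have fixed2 : sendsn (rev (iota 2 n.-1)) 1 1 [::] by apply: sends_rev_iota_fixed; lia.
by move: (sends_cat fixed1 (sends_cat hit fixed2)); rewrite cats0.
Qed.

Lemma sends_twisted_1 : sendsn twisted_gens 1 (succ 2) [:: 1; 2].
Proof.
have hit : sendsn [:: 1] 1 2 [:: 1] by apply: sends_gen_fst; rewrite succnS.
have fixed : sendsn [:: 0] 2 2 [::] by apply: sends_avoided; rewrite /= /avoids succnS; lia.
have tail : sendsn (rev (iota 2 n.-1)) 2 (succ 2) [:: 2] by apply: sends_twisted_tail; lia.
exact: (sends_cat hit (sends_cat fixed tail)).
Qed.

Lemma sends_twisted k : 3 <= k <= n -> sendsn twisted_gens k (succ k) [:: k].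
Proof.
move=> hk; have fixed : sendsn [:: 1; 0] k k [::].
  by apply: sends_avoided; rewrite /= /avoids !succnS; lia.
have tail : sendsn (rev (iota 2 n.-1)) k (succ k) [:: k] by apply: sends_twisted_tail; lia.
exact: (sends_cat fixed tail).
Qed.

Lemma sends_pow_twisted j :
  2 <= j <= n -> sendsn (word_pow twisted_gens j) 0 (succ j) (iota 0 j.+1).
Proof.
elim: j => [//|j IH] hj; have [-> | j1] : j = 1 \/ 1 < j by lia.
  exact: (sends_cat sends_twisted_0 (sends_cat sends_twisted_1 (sends_nil succ _))).
rewrite word_powSr iotaS_cat add0n; apply: (sends_cat (y := succ j)).
  by apply: IH; lia.
by rewrite succnS; [apply: sends_twisted |]; lia.
Qed.

Lemma period_section_twisted : period_section succ twisted_gens 0 n (iota 0 n.+1).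
Proof.
split; first lia.
  by have := @sends_pow_twisted n; rewrite succn_last; apply; lia.
move=> j hj; have [-> | j1] : j = 1 \/ 1 < j by lia.
  by rewrite word_pow1 sends_twisted_0.1.
by rewrite (@sends_pow_twisted j _).1 ?succnS //; lia.
Qed.

End GeneratorCycle.

Section InfiniteOrder.
Variable n : nat.
Hypothesis n_ge2 : 2 <= n.

Definition twisted_word : seq 'I_n.+1 := map inord (twisted_gens n).

Lemma twisted_word_val : map val twisted_word = twisted_gens n.
Proof.
rewrite -map_comp map_id_in // => k.
by rewrite mem_cat mem_rev mem_iota !inE => hk /=; rewrite inordK //; lia.
Qed.

Lemma h_word_val (i : 'I_n.+1) : map val (h_word i) = h_nat i.
Proof.
have filter_val (a : pred nat) :
    map val [seq x <- enum 'I_n.+1 | a (val x)] = [seq k <- iota 0 n.+1 | a k].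
  by rewrite -val_enum_ord -filter_map.
rewrite /h_word map_cat map_rev (filter_val (fun k => k <= i)) (filter_val (fun k => 0 < k < i)).
rewrite /h_nat.
have := @filter_iota_leq n.+1 0 i (ltn_ord i); rewrite add0n => ->.
congr (_ ++ rev _); rewrite -[iota 0 n.+1]/(0 :: iota 1 n) /=.
rewrite (@eq_in_filter _ _ (fun k => k < 1 + i.-1)) => [|k]; last by rewrite mem_iota; lia.
by rewrite filter_iota_ltn //; have := ltn_ord i; lia.
Qed.

Lemma infinite_order_gens :
  infinite_order (word_act (enum 'I_n.+1)) /\ infinite_order (word_act twisted_word).
Proof.
suff Hk N k : 0 < k <= N ->
    moves (iter k (word_act (enum 'I_n.+1))) /\ moves (iter k (word_act twisted_word)).
  by split=> k k0; have := Hk k k; rewrite k0 leqnn => /(_ isT) [].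
elim: N k => [|N IH] k hk; first lia.
have shorter k' : k = n * k' -> 0 < k' <= N by nia.
split.
- apply: (moves_iter_of_section (t := twisted_word) (x := inord 1) (m := n)); last 2 first.
  + lia.
  + by move=> k' /shorter /IH [].
  apply/period_section_val; rewrite val_enum_ord twisted_word_val /= inordK; last lia.
  exact: period_section_gens.
- apply: (moves_iter_of_section (t := enum 'I_n.+1) (x := ord0) (m := n)); last 2 first.
  + lia.
  + by move=> k' /shorter /IH [].
  apply/period_section_val; rewrite val_enum_ord twisted_word_val.
  exact: period_section_twisted.
Qed.

Lemma infinite_order_h (i : 'I_n.+1) : infinite_order (word_act (h_word i)).
Proof.
suff Hk k (j : 'I_n.+1) : j + k = n -> infinite_order (word_act (h_word j)).
  by apply: (Hk (n - i)); rewrite subnKC // -ltnS.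
elim: k j => [|k IH] j hjk.
  apply: (infinite_order_of_section (t := enum 'I_n.+1) (x := ord0) (m := 1)).
    rewrite addn0 in hjk; apply/period_section_val; rewrite h_word_val val_enum_ord hjk.
    by apply: period_section_h_last; lia.
  exact: infinite_order_gens.1.
have [m Hm] : exists m, period_section (succn n.+1) (h_nat j) 0 m (h_nat j.+1).
  case: (posnP j) => [-> | j0]; first by exists 2; apply: period_section_h0; lia.
  by exists 3; apply: period_section_h_mid; lia.
apply: (infinite_order_of_section (t := h_word (inord j.+1)) (x := ord0) (m := m)).
  by apply/period_section_val; rewrite !h_word_val /= inordK //; lia.
by apply: IH; rewrite inordK; lia.
Qed.

End InfiniteOrder.

Theorem lemma3p5 (d : nat) (hd : (3 <= d)%N) (i : 'I_d) :
  infinite_order (word_act (h_word i)).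
Proof. by case: d hd i => [//|n] hd i; apply: infinite_order_h. Qed.
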